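(* Let $R$ be a commutative ring and $S$ a multiplicative subset of $R$. Then: (1) every $S$-finite $u$-$S$-projective $R$-module is $u$-$S$-finitely presented; (2) every $u$-$S$-finitely presented $u$-$S$-flat $R$-module is $u$-$S$-projective.
   Context: A multiplicative subset $S$ contains $1$ and is closed under products. A sequence $A\xrightarrow{f}B\xrightarrow{g}C$ is $u$-$S$-exact at $B$ if there is $s\in S$ with $s\,\mathrm{Ker}(g)\subseteq\mathrm{Im}(f)$ and $s\,\mathrm{Im}(f)\subseteq\mathrm{Ker}(g)$; a sequence is $u$-$S$-exact if it is so at each inner term. An $R$-module $P$ is $u$-$S$-projective (resp. $u$-$S$-flat) if for every $u$-$S$-exact sequence $0\to A\to B\to C\to 0$ the induced sequence $0\to\mathrm{Hom}_R(P,A)\to\mathrm{Hom}_R(P,B)\to\mathrm{Hom}_R(P,C)\to 0$ (resp. $0\to P\otimes_RA\to P\otimes_RB\to P\otimes_RC\to 0$) is $u$-$S$-exact. An $R$-module $M$ is $S$-finite if there are $s\in S$ and a finitely generated submodule $F\subseteq M$ with $sM\subseteq F$. $M$ is $u$-$S$-finitely presented if there are $s\in S$ and an exact sequence $0\to T_1\to F\to M\to T_2\to 0$ with $F$ finitely presented and $sT_1=sT_2=0$. *)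

From HB Require Import structures.
From mathcomp Require Import all_boot all_order all_algebra.
Set Implicit Arguments. Unset Strict Implicit. Unset Printing Implicit Defensive.
Import Order.TTheory GRing.Theory Num.Theory.
Local Open Scope ring_scope.

Section UDefs.
Variable R : comPzRingType.

Definition mult_subset (S : {pred R}) : Prop :=
  1 \in S /\ {in S &, forall u v, u * v \in S}.

Variable S : {pred R}.

(* Elements of X (resp. Y) are those satisfying inX (resp. inY);
   eqY is equality in Y, zZ is "equal to zero" in Z, sY is the R-action on Y. *)
Definition uS_exact_at {X Y Z : Type} (inX : X -> Prop) (inY : Y -> Prop)
  (eqY : Y -> Y -> Prop) (zZ : Z -> Prop) (sY : R -> Y -> Y)
  (F : X -> Y) (G : Y -> Z) : Prop :=
  exists2 s, s \in S &
    (forall y, inY y -> zZ (G y) -> exists2 x, inX x & eqY (F x) (sY s y)) /\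
    (forall x, inX x -> zZ (G (sY s (F x)))).

Definition uS_exact_mod (A B C : lmodType R) (f : A -> B) (g : B -> C) : Prop :=
  @uS_exact_at A B C (fun _ => True) (fun _ => True) eq (fun c => c = 0)
    (fun r b => r *: b) f g.

(* 0 -> A --f--> B --g--> C -> 0 is u-S-exact (at A, B and C);
   the zero maps 0 -> A and C -> 0 have image {0}, resp. kernel C. *)
Definition uS_short_exact (A B C : lmodType R) (f : A -> B) (g : B -> C) : Prop :=
  uS_exact_mod (fun _ : A => 0 : A) f /\ uS_exact_mod f g /\
  uS_exact_mod g (fun _ : C => 0 : C).

(* ---- Hom_R(P, -) ----
   Elements of Hom_R(P,A) are the R-linear maps P -> A (equality pointwise,
   R-action pointwise); f_* is post-composition. *)
Definition uS_exact_hom (P A B C : lmodType R) (f : A -> B) (g : B -> C) : Prop :=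
  @uS_exact_at (P -> A) (P -> B) (P -> C)
    (fun h => linear h) (fun h => linear h)
    (fun h1 h2 => forall p, h1 p = h2 p) (fun h => forall p, h p = 0)
    (fun r h => fun p => r *: h p) (fun h => f \o h) (fun h => g \o h).

Definition uS_short_exact_hom (P A B C : lmodType R) (f : A -> B) (g : B -> C) : Prop :=
  uS_exact_hom P (fun _ : A => 0 : A) f /\ uS_exact_hom P f g /\
  uS_exact_hom P g (fun _ : C => 0 : C).

(* ---- Tensor product P (x)_R A ----
   P (x)_R A is the free abelian group Z[P x A] modulo the subgroup generated by
   the bilinearity relations.  An element of Z[P x A] is represented by a formal
   sum  t = [:: (n_1, (p_1, a_1)); ...]  meaning  sum n_i (p_i, a_i). *)
Definition fcoef {T : eqType} (t : seq (int * T)) (x : T) : int :=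
  \sum_(y <- t | y.2 == x) y.1.

Definition tensor_rel (P A : lmodType R) (r : seq (int * (P * A))) : Prop :=
  (exists (p p' : P) (a : A), r = [:: (1, (p + p', a)); (-1, (p, a)); (-1, (p', a))])
  \/ (exists (p : P) (a a' : A), r = [:: (1, (p, a + a')); (-1, (p, a)); (-1, (p, a'))])
  \/ (exists (c : R) (p : P) (a : A), r = [:: (1, (c *: p, a)); (-1, (p, c *: a))]).

Definition tensor_zero (P A : lmodType R) (t : seq (int * (P * A))) : Prop :=
  exists L : seq (int * seq (int * (P * A))),
    (forall l, l \in L -> tensor_rel l.2) /\
    (forall x, fcoef t x = \sum_(l <- L) l.1 * fcoef l.2 x).

Definition tensor_sub (P A : lmodType R) (t1 t2 : seq (int * (P * A))) :=
  t1 ++ map (fun y => (- y.1, y.2)) t2.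

Definition tensor_scale (P A : lmodType R) (r : R) (t : seq (int * (P * A))) :=
  map (fun y => (y.1, (y.2.1, r *: y.2.2))) t.

Definition tensor_map (P A B : lmodType R) (f : A -> B) (t : seq (int * (P * A))) :
  seq (int * (P * B)) := map (fun y => (y.1, (y.2.1, f y.2.2))) t.

Definition uS_exact_tensor (P A B C : lmodType R) (f : A -> B) (g : B -> C) : Prop :=
  @uS_exact_at (seq (int * (P * A))) (seq (int * (P * B))) (seq (int * (P * C)))
    (fun _ => True) (fun _ => True)
    (fun t1 t2 => tensor_zero (tensor_sub t1 t2)) (@tensor_zero P C)
    (@tensor_scale P B) (tensor_map f) (tensor_map g).

Definition uS_short_exact_tensor (P A B C : lmodType R) (f : A -> B) (g : B -> C) : Prop :=
  uS_exact_tensor P (fun _ : A => 0 : A) f /\ uS_exact_tensor P f g /\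
  uS_exact_tensor P g (fun _ : C => 0 : C).

Definition uS_projective (P : lmodType R) : Prop :=
  forall (A B C : lmodType R) (f : A -> B) (g : B -> C),
    linear f -> linear g -> uS_short_exact f g -> uS_short_exact_hom P f g.

Definition uS_flat (P : lmodType R) : Prop :=
  forall (A B C : lmodType R) (f : A -> B) (g : B -> C),
    linear f -> linear g -> uS_short_exact f g -> uS_short_exact_tensor P f g.

Definition S_finite (M : lmodType R) : Prop :=
  exists2 s, s \in S & exists (n : nat) (x : 'I_n -> M),
    forall m : M, exists c : 'I_n -> R, s *: m = \sum_(i < n) c i *: x i.

Definition fin_presented (F : lmodType R) : Prop :=
  exists (n m : nat) (phi : 'rV[R]_m -> 'rV[R]_n) (pi : 'rV[R]_n -> F),
    [/\ linear phi, linear pi, (forall y : F, exists v, pi v = y) &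
        (forall v, pi v = 0 <-> exists w, phi w = v)].

Definition uS_fin_presented (M : lmodType R) : Prop :=
  exists2 s, s \in S &
  exists (T1 F T2 : lmodType R) (i : T1 -> F) (h : F -> M) (q : M -> T2),
    [/\ linear i, linear h, linear q, fin_presented F &
    [/\ (forall t, i t = 0 -> t = 0),
        (forall y, h y = 0 <-> exists t, i t = y),
        (forall m, q m = 0 <-> exists y, h y = m) &
        (forall z : T2, exists m, q m = z)]] /\
    ((forall t : T1, s *: t = 0) /\ (forall z : T2, s *: z = 0)).

End UDefs.

(** (1) If [s M] lies in the image of [pi : R^n -> M], lifting [id_M] along [pi]
    gives [sigma] with [pi (sigma x) = t x]; then [phi := t - sigma \o pi]
    satisfies [pi \o phi = 0] and [t ker pi <= im phi], so [pi] induces a map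
    [R^n / im phi -> M] whose kernel and cokernel are killed by [s t].
    (2) Up to [S], [M] is the cokernel of some [phi : R^m -> R^n] through
    [psi : R^n -> M].  The element [sum_i psi e_i (x) e_i] of [M (x) R^n] dies
    in [M (x) R^m] under the transpose of [phi], so flatness, applied to
    [0 -> ker phi^T -> R^n -> im phi^T -> 0] and
    [0 -> im phi^T -> R^m -> coker phi^T -> 0], brings a multiple of it back
    from [M (x) ker phi^T].  Pairing with a row [v] turns this into
    [s psi v = sum_z <v, k_z> m_z] with [phi^T k_z = 0]: up to [S], [psi]
    factors through a free module by a map killing [ker psi], and maps out of
    [M] lift along u-S-epimorphisms by lifting the [h m_z]. *)

From HB Require Import structures.
From mathcomp Require Import all_boot all_order all_algebra.
From mathcomp Require Import boolp functions.
Set Implicit Arguments. Unset Strict Implicit. Unset Printing Implicit Defensive.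
Import Order.TTheory GRing.Theory Num.Theory.
Local Open Scope ring_scope.
Local Open Scope quotient_scope.

Definition pack_linear (R : comPzRingType) (U V : lmodType R) (f : U -> V)
    (lf : linear f) : {linear U -> V} :=
  let m := GRing.isLinear.Build R U V *:%R f lf in HB.pack f m.

Lemma linear_structure (R : comPzRingType) (U V : lmodType R) (f : U -> V) :
  linear f -> exists g : {linear U -> V}, f = g.
Proof. by move=> lf; exists (pack_linear lf). Qed.

Section Submodule.
Variables (R : comPzRingType) (V : lmodType R) (N : submodClosed V).

Record submod := Submod { submod_val : V; submod_valP : submod_val \in N }.
HB.instance Definition _ := [isSub for submod_val].
HB.instance Definition _ := [Choice of submod by <:].
HB.instance Definition _ := [SubChoice_isSubLmodule of submod by <:].

(* [submodClosed] only records closure under [+] and [*:], whereas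
   [Quotient.quot] needs a [zmodClosed] predicate. *)
Definition submod_zmodClosed : zmodClosed V :=
  let m := GRing.isZmodClosed.Build V (N : {pred V})
    (GRing.subsemimod_closedB (GRing.subsemimodClosedP N)) in
  HB.pack (N : {pred V}) m.

Definition quotmod := Quotient.quot submod_zmodClosed.
HB.instance Definition _ := Choice.on quotmod.
HB.instance Definition _ := GRing.Zmodule.on quotmod.
HB.instance Definition _ := EqQuotient.on quotmod.

Definition quotmod_scale (a : R) := lift_op1 quotmod ( *:%R a).

Lemma repr_pi_quotmod x : repr (\pi_quotmod x) - x \in N.
Proof.
have Nx : repr (\pi_quotmod x) - x \in submod_zmodClosed.
  by rewrite Quotient.idealrBE reprK.
exact: Nx.
Qed.

Lemma pi_quotmod_scale a : {morph \pi_quotmod : x / a *: x >-> quotmod_scale a x}.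
Proof.
move=> x; unlock quotmod_scale; apply/eqP; rewrite piE Quotient.equivE.
by rewrite -scalerBr -opprB -scaleN1r scalerA rpredZ // repr_pi_quotmod.
Qed.
Canonical pi_quotmod_scale_morph a := PiMorph1 (pi_quotmod_scale a).

Fact quotmod_scaleA a b x :
  quotmod_scale a (quotmod_scale b x) = quotmod_scale (a * b) x.
Proof. by rewrite -[x]reprK !piE scalerA. Qed.
Fact quotmod_scale1 : left_id 1 quotmod_scale.
Proof. by move=> x; rewrite -[x]reprK !piE scale1r. Qed.
Fact quotmod_scaleDr : right_distributive quotmod_scale +%R.
Proof. by move=> a x y; rewrite -[x]reprK -[y]reprK !piE scalerDr. Qed.
Fact quotmod_scaleDl x : {morph quotmod_scale^~ x : a b / a + b}.
Proof. by move=> a b; rewrite -[x]reprK !piE scalerDl. Qed.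
HB.instance Definition _ := GRing.Zmodule_isLmodule.Build R quotmod
  quotmod_scaleA quotmod_scale1 quotmod_scaleDr quotmod_scaleDl.

Fact pi_quotmod_scalable : scalable (\pi_quotmod : V -> quotmod).
Proof. exact: pi_quotmod_scale. Qed.
HB.instance Definition _ := GRing.isScalable.Build R V quotmod *:%R \pi_quotmod
  pi_quotmod_scalable.

Lemma pi_quotmod_eq0 x : (\pi_quotmod x == 0) = (x \in N).
Proof. by rewrite -(raddf0 \pi_quotmod) -Quotient.idealrBE subr0. Qed.

End Submodule.

Section KernelImage.
Variables (R : comPzRingType) (U V : lmodType R) (f : {linear U -> V}).

Definition lkernel : {pred U} := [pred u | f u == 0].
Definition limage : {pred V} := [pred v | `[< exists u, f u = v >]].

Fact lkernel_submod_closed : submod_closed lkernel.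
Proof.
split=> [|a u v]; rewrite !inE ?raddf0 //.
by rewrite linearP => /eqP-> /eqP->; rewrite scaler0 addr0.
Qed.
HB.instance Definition _ :=
  GRing.isSubmodClosed.Build R U lkernel lkernel_submod_closed.

Fact limage_submod_closed : submod_closed limage.
Proof.
split=> [|a _ _ /asboolP[u <-] /asboolP[v <-]]; apply/asboolP.
  by exists 0; rewrite raddf0.
by exists (a *: u + v); rewrite linearP.
Qed.
HB.instance Definition _ :=
  GRing.isSubmodClosed.Build R V limage limage_submod_closed.

Lemma limageP v : reflect (exists u, f u = v) (v \in limage).
Proof. exact: asboolP. Qed.

Definition corestr (u : U) : submod limage :=
  Submod (introT (limageP _) (ex_intro _ u erefl)).

Fact corestr_linear : linear corestr.
Proof. by move=> a u v; apply: val_inj; rewrite /= linearP. Qed.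
HB.instance Definition _ := GRing.isLinear.Build R U (submod limage) *:%R corestr
  corestr_linear.

Lemma val_corestr u : val (corestr u) = f u.
Proof. by []. Qed.

End KernelImage.

Section QuotientLift.
Variables (R : comPzRingType) (V W : lmodType R) (N : submodClosed V).
Variables (f : {linear V -> W}) (fN : {in N, forall v, f v = 0}).

Definition quotmod_lift (q : quotmod N) : W := f (repr q).

Lemma quotmod_liftE v : quotmod_lift (\pi v) = f v.
Proof.
by apply/eqP; rewrite -subr_eq0 -raddfB; apply/eqP/fN/repr_pi_quotmod.
Qed.

Lemma quotmod_lift_linear : linear quotmod_lift.
Proof.
move=> a x y; rewrite -[x]reprK -[y]reprK -linearP.
by rewrite !quotmod_liftE linearP.
Qed.

End QuotientLift.

Section RowCombination.
Variables (R : comPzRingType) (M : lmodType R) (n : nat) (x : 'I_n -> M).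

Definition row_comb (v : 'rV[R]_n) : M := \sum_i v 0 i *: x i.

Fact row_comb_linear : linear row_comb.
Proof.
move=> a u v; rewrite /row_comb scaler_sumr -big_split; apply: eq_bigr => i _.
by rewrite !mxE scalerDl scalerA.
Qed.
HB.instance Definition _ := GRing.isLinear.Build R 'rV[R]_n M *:%R row_comb
  row_comb_linear.

End RowCombination.

Lemma intmul_fctE (T : Type) (V : zmodType) (f : T -> V) (n : int) x :
  (f *~ n) x = f x *~ n.
Proof. by rewrite /intmul; case: n => n; rewrite ?opprfctE natmulfctE. Qed.

Section TensorProduct.
Variables (R : comPzRingType) (P A : lmodType R).
Local Notation T := (P * A)%type.
Implicit Types t : seq (int * T).

Definition tensor_relations : {pred T -> int} :=
  [pred f | `[< exists L : seq (int * seq (int * T)),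
     (forall l, l \in L -> tensor_rel l.2) /\
     forall x, f x = \sum_(l <- L) l.1 * fcoef l.2 x >]].

Fact tensor_relations_zmod_closed : zmod_closed tensor_relations.
Proof.
split=> [|f g /asboolP[L [LR fL]] /asboolP[L' [LR' gL']]]; apply/asboolP.
  by exists [::]; split=> // x; rewrite big_nil.
exists (L ++ [seq (- l.1, l.2) | l <- L']); split.
  by move=> l; rewrite mem_cat => /orP[/LR // | /mapP[l' /LR' ? ->]].
move=> x; rewrite -[(f - g) x]/(f x - g x) fL gL' big_cat big_map -sumrN.
by congr (_ + _); apply: eq_bigr => l _; rewrite mulNr.
Qed.
HB.instance Definition _ := GRing.isZmodClosed.Build (T -> int) tensor_relations
  tensor_relations_zmod_closed.

(* The ambient group is all of [T -> int], not only the finitely supported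
   functions, so [tensor] contains [P (x)_R A] as the subgroup of the classes
   [tens_sum t] of formal sums; no other element is ever used. *)
Definition tensor := Quotient.quot (GRing.ZmodClosed.clone _ tensor_relations _).
HB.instance Definition _ := Choice.on tensor.
HB.instance Definition _ := GRing.Zmodule.on tensor.
HB.instance Definition _ := EqQuotient.on tensor.

Definition tens (p : P) (a : A) : tensor := \pi_tensor (fcoef [:: (1, (p, a))]).

Definition tensor_eval (V : zmodType) (beta : P -> A -> V) t : V :=
  \sum_(y <- t) beta y.2.1 y.2.2 *~ y.1.

Local Notation tens_sum := (tensor_eval tens).

Lemma tensor_eval_sub (V : zmodType) (beta : P -> A -> V) t1 t2 :
  tensor_eval beta (tensor_sub t1 t2) = tensor_eval beta t1 - tensor_eval beta t2.
Proof.
rewrite /tensor_eval big_cat big_map -sumrN.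
by congr (_ + _); apply: eq_bigr => y _; rewrite mulrNz.
Qed.

Lemma fcoef_sum t : fcoef t = \sum_(y <- t) fcoef [:: (1, y.2)] *~ y.1.
Proof.
apply/funext => x; rewrite fct_sumE /fcoef big_mkcond; apply: eq_bigr => y _.
by rewrite intmul_fctE big_mkcond big_seq1 /=; case: eqP => _; rewrite ?mul0rz ?intz.
Qed.

Lemma tens_sum_pi t : tens_sum t = \pi_tensor (fcoef t).
Proof.
rewrite /tensor_eval fcoef_sum raddf_sum.
by apply: eq_bigr => -[n [p a]] _; rewrite raddfMz.
Qed.

Lemma tensor_zeroP t : tensor_zero t <-> tens_sum t = 0.
Proof.
rewrite tens_sum_pi (rwP eqP) -(raddf0 \pi_tensor) -Quotient.idealrBE subr0.
exact: (rwP (asboolP _)).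
Qed.

Lemma tens_sum_rel l : tensor_rel l -> tens_sum l = 0.
Proof.
move=> l_rel; apply/tensor_zeroP; exists [:: (1, l)].
by split=> [l' /[1!inE] /eqP-> // | x]; rewrite big_seq1 mul1r.
Qed.

Lemma tensDl p p' a : tens (p + p') a = tens p a + tens p' a.
Proof.
have /tens_sum_rel : tensor_rel [:: (1, (p + p', a)); (-1, (p, a)); (-1, (p', a))].
  by left; exists p, p', a.
rewrite /tensor_eval !big_cons big_nil /= mulr1z !mulrN1z addr0 -opprD.
by move/eqP; rewrite subr_eq0 => /eqP.
Qed.

Lemma tensDr p a a' : tens p (a + a') = tens p a + tens p a'.
Proof.
have /tens_sum_rel : tensor_rel [:: (1, (p, a + a')); (-1, (p, a)); (-1, (p, a'))].
  by right; left; exists p, a, a'.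
rewrite /tensor_eval !big_cons big_nil /= mulr1z !mulrN1z addr0 -opprD.
by move/eqP; rewrite subr_eq0 => /eqP.
Qed.

Lemma tensZ c p a : tens (c *: p) a = tens p (c *: a).
Proof.
have /tens_sum_rel : tensor_rel [:: (1, (c *: p, a)); (-1, (p, c *: a))].
  by right; right; exists c, p, a.
rewrite /tensor_eval !big_cons big_nil /= mulr1z mulrN1z addr0.
by move/eqP; rewrite subr_eq0 => /eqP.
Qed.

Fact tens_is_zmod_morphism p : zmod_morphism (tens p).
Proof. by move=> a a'; apply/eqP; rewrite eq_sym subr_eq -tensDr subrK. Qed.
HB.instance Definition _ p :=
  GRing.isZmodMorphism.Build A tensor (tens p) (tens_is_zmod_morphism p).

Lemma tens0l a : tens 0 a = 0.
Proof. by apply: (addrI (tens 0 a)); rewrite -tensDl !addr0. Qed.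

Lemma tens_suml I (r : seq I) (Pr : pred I) (F : I -> P) a :
  tens (\sum_(i <- r | Pr i) F i) a = \sum_(i <- r | Pr i) tens (F i) a.
Proof. by elim/big_rec2: _ => [|i x y _ <-]; rewrite ?tens0l ?tensDl. Qed.

Lemma tensMzl p a n : tens (p *~ n) a = tens p a *~ n.
Proof. by rewrite -scaler_int tensZ scaler_int raddfMz. Qed.

Section UniversalProperty.
Variables (V : zmodType) (beta : P -> A -> V).
Hypothesis betaDl : forall p p' a, beta (p + p') a = beta p a + beta p' a.
Hypothesis betaDr : forall p a a', beta p (a + a') = beta p a + beta p a'.
Hypothesis betaZ : forall c p a, beta (c *: p) a = beta p (c *: a).

Lemma tensor_eval_fcoef t r : uniq r -> {subset map snd t <= r} ->
  tensor_eval beta t = \sum_(z <- r) beta z.1 z.2 *~ fcoef t z.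
Proof.
move=> r_uniq t_r; rewrite /tensor_eval; symmetry.
under eq_bigr => z _ do rewrite /fcoef mulrz_sumr big_mkcond.
rewrite exchange_big /=; apply: eq_big_seq => y y_t; rewrite -big_mkcond.
rewrite (eq_bigl (pred1 y.2)) => [|z]; last by rewrite /= eq_sym.
by rewrite -big_filter filter_pred1_uniq ?t_r ?map_f // big_seq1.
Qed.

Lemma tensor_eval_rel l : tensor_rel l -> tensor_eval beta l = 0.
Proof.
rewrite /tensor_eval; case=> [[p [p' [a ->]]] | [[p [a [a' ->]]] | [c [p [a ->]]]]];
by rewrite !big_cons big_nil /= ?betaDl ?betaDr ?betaZ mulr1z !mulrN1z addr0
   -?opprD subrr.
Qed.

Lemma tensor_eval_zero t : tensor_zero t -> tensor_eval beta t = 0.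
Proof.
move=> [L [LR tL]].
pose r := undup (map snd t ++ flatten [seq map snd l.2 | l <- L]).
have r_uniq : uniq r := undup_uniq _.
have l_r l : l \in L -> {subset map snd l.2 <= r}.
  move=> lL z zl; rewrite mem_undup mem_cat; apply/orP; right.
  apply/flattenP; exists (map snd l.2) => //.
  exact: (map_f (fun l => map snd l.2) lL).
rewrite (tensor_eval_fcoef r_uniq) => [|z zt]; last by rewrite mem_undup mem_cat zt.
under eq_bigr => z _ do rewrite tL mulrz_sumr.
rewrite exchange_big big1_seq // => l /andP[_ lL].
under eq_bigr => z _ do rewrite mulrC mulrzA.
rewrite -mulrz_suml -(tensor_eval_fcoef r_uniq (l_r l lL)).
by rewrite tensor_eval_rel ?mul0rz //; apply: LR.
Qed.

Lemma tensor_eval_eq t1 t2 :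
  tens_sum t1 = tens_sum t2 -> tensor_eval beta t1 = tensor_eval beta t2.
Proof.
move/eqP; rewrite -subr_eq0 -tensor_eval_sub => /eqP/tensor_zeroP/tensor_eval_zero.
by move/eqP; rewrite tensor_eval_sub subr_eq0 => /eqP.
Qed.

End UniversalProperty.

Lemma tens_sum_map0 (B : lmodType R) (t : seq (int * (P * B))) :
  tens_sum (tensor_map (fun _ => 0 : A) t) = 0.
Proof. by rewrite /tensor_eval big_map big1 // => y _; rewrite raddf0 mul0rz. Qed.

End TensorProduct.

Arguments tens {R P A}.
Notation tens_sum := (tensor_eval tens).

Lemma tensor_scale_map (R : comPzRingType) (P B C : lmodType R) (f : {linear B -> C})
    s (t : seq (int * (P * B))) :
  tensor_scale s (tensor_map f t) = tensor_map f (tensor_scale s t).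
Proof.
rewrite /tensor_scale /tensor_map -!map_comp.
by apply: eq_map => y /=; rewrite linearZZ.
Qed.

Lemma tens_sum_free (R : comPzRingType) (P : lmodType R) m n
    (t : seq (int * (P * 'M[R]_(m, n)))) :
  (forall i j, \sum_(y <- t) (y.2.2 i j *: y.2.1) *~ y.1 = 0) -> tens_sum t = 0.
Proof.
move=> coord0.
have tensE p (a : 'M_(m, n)) :
    tens p a = \sum_(ij : 'I_m * 'I_n) tens (a ij.1 ij.2 *: p) (delta_mx ij.1 ij.2).
  rewrite {1}[a]matrix_sum_delta pair_bigA raddf_sum.
  by apply: eq_bigr => ij _; rewrite tensZ.
rewrite /tensor_eval; under eq_bigr => y _ do rewrite tensE mulrz_suml.
rewrite exchange_big big1 // => ij _.
under eq_bigr => y _ do rewrite -tensMzl.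
by rewrite -tens_suml coord0 tens0l.
Qed.

Lemma tens_sum_pairing (R : comPzRingType) (P : lmodType R) n (v : 'rV[R]_n)
    (t1 t2 : seq (int * (P * 'cV[R]_n))) :
  tens_sum t1 = tens_sum t2 ->
  tensor_eval (fun p k => (v *m k) 0 0 *: p) t1 =
  tensor_eval (fun p k => (v *m k) 0 0 *: p) t2.
Proof.
apply: tensor_eval_eq => [p p' k | p k k' | c p k]; first exact: scalerDr.
  by rewrite mulmxDr mxE scalerDl.
by rewrite -scalemxAr [X in _ = X *: p]mxE scalerA mulrC.
Qed.

Section uSModules.
Variables (R : comPzRingType) (S : {pred R}).
Hypothesis S_mult : mult_subset S.

Lemma uS_short_exact_parts (A B C : lmodType R) (f : A -> B) (g : B -> C) :
  uS_short_exact S f g ->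
  [/\ exists2 s, s \in S & forall a, f a = 0 -> s *: a = 0,
      exists2 s, s \in S & (forall b, g b = 0 -> exists a, f a = s *: b) /\
                           (forall a, g (s *: f a) = 0) &
      exists2 s, s \in S & forall c, exists b, g b = s *: c].
Proof.
move=> [[s1 s1S [inj _]] [[s2 s2S [ker im]] [s3 s3S [surj _]]]].
split; [exists s1 | exists s2 | exists s3] => //.
- by move=> a /(inj a I)[x _ ->].
- split=> [b /(ker b I)[a _ fa]|a]; [by exists a | exact: im].
- by move=> c; have [b _ gb] := surj c I erefl; exists b.
Qed.

Lemma uS_short_exact_intro (A B C : lmodType R) (f : {linear A -> B})
    (g : {linear B -> C}) s :
  s \in S -> injective f -> (forall b, g b = 0 <-> exists a, f a = b) ->
  (forall c, exists b, g b = s *: c) -> uS_short_exact S f g.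
Proof.
have [S1 _] := S_mult; move=> sS finj gker gsurj.
split; [|split]; [exists 1 | exists 1 | exists s] => //; split=> //.
- move=> a _ fa0; exists 0 => //.
  by rewrite scale1r; apply: finj; rewrite fa0 raddf0.
- by move=> _ _; rewrite scaler0 raddf0.
- by move=> b _ /gker[a fa]; exists a; rewrite ?scale1r.
- by move=> a _; rewrite scale1r; apply/gker; exists a.
- by move=> c _ _; have [b gb] := gsurj c; exists b.
Qed.

Lemma sub_quotmod_exact (V : lmodType R) (N : submodClosed V) :
  uS_short_exact S (val : submod N -> V) (\pi_(quotmod N)).
Proof.
have [S1 _] := S_mult; apply: (uS_short_exact_intro S1 val_inj).
  move=> v; rewrite (rwP eqP) pi_quotmod_eq0.
  by split=> [Nv | [u <-]]; [exists (Submod Nv) | apply: submod_valP].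
by move=> q; exists (repr q); rewrite scale1r; apply: reprK.
Qed.

Lemma lkernel_exact (B C : lmodType R) (g : {linear B -> C}) s :
  s \in S -> (forall c, exists b, g b = s *: c) ->
  uS_short_exact S (val : submod (lkernel g) -> B) g.
Proof.
move=> sS gsurj; apply: (uS_short_exact_intro sS val_inj) => // b.
split=> [/eqP gb0|[k <-]]; last exact/eqP/(submod_valP k).
by exists (Submod (gb0 : b \in lkernel g)).
Qed.

Lemma corestr_exact (U V : lmodType R) (g : {linear U -> V}) :
  uS_short_exact S (val : submod (lkernel g) -> U) (corestr g).
Proof.
have [S1 _] := S_mult; apply: (uS_short_exact_intro S1 val_inj).
  move=> u; split=> [/(congr1 val)/eqP gu0|[k <-]].
    by exists (Submod (gu0 : u \in lkernel g)).
  by apply: val_inj; rewrite val_corestr raddf0; apply/eqP/(submod_valP k).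
move=> c; have /limageP[u gu] := submod_valP c.
by exists u; apply: val_inj; rewrite scale1r val_corestr.
Qed.

Lemma uS_exact_hom_left (P A B C : lmodType R) (f : {linear A -> B})
    (g : {linear B -> C}) :
  uS_short_exact S f g ->
  uS_exact_hom S P (fun _ : A => 0 : A) f /\ uS_exact_hom S P f g.
Proof.
have [_ SM] := S_mult.
case/uS_short_exact_parts=> [[s1 s1S inj] [s2 s2S [ker im]] _]; split.
  exists s1 => //; split=> [h _ fh0 | h _ p] /=; last by rewrite scaler0 raddf0.
  exists (fun _ => 0) => [a u v | p]; first by rewrite scaler0 addr0.
  by rewrite (inj _ (fh0 p)).
exists (s1 * s2); first exact: SM.
split=> [h lh gh0 | h _ p] /=; last by rewrite -scalerA linearZZ im scaler0.
have [ch chP] := choice (fun p => ker _ (gh0 p)).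
exists (fun p => s1 *: ch p) => [a u v | p]; last by rewrite linearZZ chP scalerA.
have fd : f (ch (a *: u + v) - (a *: ch u + ch v)) = 0.
  by rewrite linearB linearP !chP lh scalerDr !scalerA mulrC subrr.
move/inj: fd; rewrite scalerBr => /eqP; rewrite subr_eq0 => /eqP->.
by rewrite scalerDr !scalerA mulrC.
Qed.

Definition uS_lifting (P : lmodType R) : Prop :=
  forall (B C : lmodType R) (g : {linear B -> C}) s, s \in S ->
    (forall c, exists b, g b = s *: c) ->
  exists2 t, t \in S & forall h : {linear P -> C},
    exists sigma : {linear P -> B}, forall p, g (sigma p) = t *: h p.

Lemma uS_projectiveP (P : lmodType R) : uS_projective S P <-> uS_lifting P.
Proof.
split=> [Pproj B C g s sS gsurj | Plift A B C f g lf lg fg_exact].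
  have [_ [_ [t tS [lift _]]]] :=
    Pproj _ _ _ _ _ (linearP val) (linearP g) (lkernel_exact sS gsurj).
  exists t => // h; have [sigma lsigma gsigma] := lift h (linearP h) (fun _ => erefl).
  by exists (pack_linear lsigma).
have [hom_A hom_B] :=
  uS_exact_hom_left P (fg_exact : uS_short_exact S (pack_linear lf) (pack_linear lg)).
have [_ _ [s sS gsurj]] := uS_short_exact_parts fg_exact.
have [t tS lift] := Plift _ _ (pack_linear lg) s sS gsurj.
split; [exact: hom_A | split; [exact: hom_B |]].
exists t => //; split=> // h lh _.
by have [sigma gsigma] := lift (pack_linear lh); exists sigma => //; apply: linearP.
Qed.

Lemma fin_presented_coker n m (phi : {linear 'rV[R]_m -> 'rV[R]_n}) :
  fin_presented (quotmod (limage phi)).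
Proof.
exists n, m, phi, \pi_(quotmod (limage phi)); split; try exact: linearPZ.
  by move=> q; exists (repr q); apply: reprK.
by move=> v; rewrite (rwP eqP) pi_quotmod_eq0; split=> /limageP.
Qed.

Lemma uS_fin_presented_of_uS_iso (F M : lmodType R) (h : {linear F -> M}) s :
  s \in S -> fin_presented F -> (forall x, h x = 0 -> s *: x = 0) ->
  (forall y, exists x, h x = s *: y) -> uS_fin_presented S M.
Proof.
move=> sS Ffp hker hsurj; exists s => //.
exists (submod (lkernel h)), F, (quotmod (limage h)), val, h, \pi_(quotmod (limage h)).
split; first split; try exact: linearPZ.
- exact: Ffp.
- split=> [t t0 | y | y | q]; first by apply: val_inj; rewrite t0 raddf0.
  + split=> [/eqP hy0 | [t <-]]; last exact/eqP/(submod_valP t).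
    by exists (Submod (hy0 : y \in lkernel h)).
  + by rewrite (rwP eqP) pi_quotmod_eq0; split=> /limageP.
  + by exists (repr q); apply: reprK.
- split=> [t | q].
    by apply: val_inj; rewrite linearZZ raddf0 /=; apply/hker/eqP/(submod_valP t).
  rewrite -[q]reprK -linearZZ; apply/eqP; rewrite pi_quotmod_eq0.
  by apply/limageP; apply: hsurj.
Qed.

Lemma uS_projective_fin_presented (M : lmodType R) :
  S_finite S M -> uS_projective S M -> uS_fin_presented S M.
Proof.
have [_ SM] := S_mult.
move=> [s sS [n [x xgen]]] /uS_projectiveP Mlift.
pose pi : {linear 'rV[R]_n -> M} := row_comb x.
have pi_surj y : exists v, pi v = s *: y.
  have [c ->] := xgen y; exists (\row_i c i).
  by apply: eq_bigr => i _; rewrite mxE.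
have [t tS lift] := Mlift _ _ pi s sS pi_surj.
have [sigma pi_sigma] := lift idfun.
pose phi : {linear 'rV[R]_n -> 'rV[R]_n} := ( *:%R t) \- (sigma \o pi).
have phiE v : phi v = t *: v - sigma (pi v) by [].
have pi_phi v : pi (phi v) = 0 by rewrite phiE linearB linearZZ pi_sigma subrr.
have piN : {in limage phi, forall v, pi v = 0} by move=> _ /limageP[w <-].
pose h := pack_linear (quotmod_lift_linear piN).
have hE v : h (\pi v) = pi v := quotmod_liftE piN v.
apply: (uS_fin_presented_of_uS_iso (h := h) (SM _ _ sS tS) (fin_presented_coker phi)).
  move=> q; rewrite -[q]reprK hE => pi0.
  rewrite -linearZZ; apply/eqP; rewrite pi_quotmod_eq0; apply/limageP.
  exists (s *: repr q).
  by rewrite phiE (linearZZ pi) pi0 scaler0 raddf0 subr0 scalerA mulrC.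
move=> y; have [v piv] := pi_surj y.
by exists (\pi_(quotmod (limage phi)) (t *: v)); rewrite hE linearZZ piv scalerA mulrC.
Qed.

Lemma uS_flat_tensor_inj (M A B C : lmodType R) (f : {linear A -> B})
    (g : {linear B -> C}) :
  uS_flat S M -> uS_short_exact S f g ->
  exists2 s, s \in S & forall t : seq (int * (M * A)),
    tens_sum (tensor_map f t) = 0 -> tens_sum (tensor_scale s t) = 0.
Proof.
move=> Mflat fg.
have [[s sS [inj _]] _] := Mflat _ _ _ _ _ (linearPZ f) (linearPZ g) fg.
exists s => // t /tensor_zeroP /(inj t I)[x _ /tensor_zeroP].
by rewrite tensor_eval_sub tens_sum_map0 sub0r => /eqP; rewrite oppr_eq0 => /eqP.
Qed.

Lemma uS_flat_tensor_mid (M A B C : lmodType R) (f : {linear A -> B})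
    (g : {linear B -> C}) :
  uS_flat S M -> uS_short_exact S f g ->
  exists2 s, s \in S & forall t : seq (int * (M * B)),
    tens_sum (tensor_map g t) = 0 ->
    exists x, tens_sum (tensor_map f x) = tens_sum (tensor_scale s t).
Proof.
move=> Mflat fg.
have [_ [[s sS [mid _]] _]] := Mflat _ _ _ _ _ (linearPZ f) (linearPZ g) fg.
exists s => // t /tensor_zeroP /(mid t I)[x _ /tensor_zeroP].
by rewrite tensor_eval_sub => /eqP; rewrite subr_eq0 => /eqP; exists x.
Qed.

Lemma uS_flat_tensor_ker (M U V : lmodType R) (g : {linear U -> V}) :
  uS_flat S M ->
  exists2 s, s \in S & forall t : seq (int * (M * U)),
    tens_sum (tensor_map g t) = 0 ->
    exists x : seq (int * (M * submod (lkernel g))),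
      tens_sum (tensor_map val x) = tens_sum (tensor_scale s t).
Proof.
have [_ SM] := S_mult; move=> Mflat.
have [s1 s1S inj] := uS_flat_tensor_inj Mflat (sub_quotmod_exact (limage g)).
have [s2 s2S mid] := uS_flat_tensor_mid Mflat (corestr_exact g).
exists (s2 * s1); first exact: SM.
move=> t gt0; have : tens_sum (tensor_map (corestr g) (tensor_scale s1 t)) = 0.
  by rewrite -tensor_scale_map; apply: inj; rewrite /tensor_map -map_comp.
case/mid=> x xE; exists x; rewrite xE; congr tens_sum.
by rewrite /tensor_scale -map_comp; apply: eq_map => y /=; rewrite scalerA.
Qed.

Lemma uS_flat_relations (M : lmodType R) n m (psi : {linear 'rV[R]_n -> M})
    (phi : {linear 'rV[R]_m -> 'rV[R]_n}) :
  uS_flat S M -> (forall w, psi (phi w) = 0) ->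
  exists2 s, s \in S & exists zs : seq (M * 'cV[R]_n),
    (forall z, z \in zs -> lin1_mx phi *m z.2 = 0) /\
    forall v, s *: psi v = \sum_(z <- zs) (v *m z.2) 0 0 *: z.1.
Proof.
move=> Mflat psi_phi; pose A := lin1_mx phi.
(* [phi w = w *m A], so [mulmx A] is the transpose of [phi] on columns. *)
have psiE v : psi v = \sum_i v 0 i *: psi (delta_mx 0 i).
  by rewrite {1}[v]row_sum_delta linear_sum; apply: eq_bigr => i _; rewrite linearZZ.
pose t0 := [seq (1%:Z, (psi (delta_mx 0 i), delta_mx i 0 : 'cV[R]_n))
            | i <- index_enum 'I_n].
have [s sS ker] := uS_flat_tensor_ker (mulmx A : {linear 'cV[R]_n -> 'cV[R]_m}) Mflat.
have /ker[x xE] : tens_sum (tensor_map (mulmx A) t0) = 0.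
  apply: tens_sum_free => j k; rewrite /tensor_map /t0 -map_comp big_map.
  under eq_bigr => i _ do rewrite /= -colE !mxE mulr1z.
  by rewrite -psiE psi_phi.
exists s => //; exists [seq (z.2.1 *~ z.1, val z.2.2) | z <- x]; split.
  by move=> _ /mapP[z _ ->]; apply/eqP/(submod_valP z.2.2).
move=> v; have := tens_sum_pairing v xE; rewrite /tensor_eval !big_map /=.
under eq_bigr => z _ do rewrite scalerMzr.
move=> ->; rewrite psiE scaler_sumr; apply: eq_bigr => i _.
by rewrite mulr1z -scalemxAr -colE !mxE scalerA.
Qed.

Lemma uS_fin_presented_presentation (M : lmodType R) :
  uS_fin_presented S M ->
  exists2 s, s \in S & exists n m (psi : {linear 'rV[R]_n -> M})
    (phi : {linear 'rV[R]_m -> 'rV[R]_n}),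
  [/\ forall w, psi (phi w) = 0, forall x, exists v, psi v = s *: x &
      forall v, psi v = 0 -> exists w, phi w = s *: v].
Proof.
move=> [s sS [T1 [F [T2 [i0 [h0 [q0 [[/linear_structure[i ->]
  /linear_structure[h ->] /linear_structure[q ->] Ffp
  [i_inj h_ker q_ker q_surj]] [sT1 sT2]]]]]]]]].
case: Ffp => n [m [phi0 [pi0 [/linear_structure[phi ->]
  /linear_structure[pi ->] pi_surj pi_ker]]]].
exists s => //; exists n, m, (h \o pi), phi; split=> /=.
- move=> w; have /pi_ker-> : exists w', phi w' = phi w by exists w.
  exact: raddf0.
- move=> x; have /q_ker[y hy] : q (s *: x) = 0 by rewrite linearZZ sT2.
  by have [v piv] := pi_surj y; exists v; rewrite piv hy.
- move=> v /h_ker[t it]; apply/pi_ker.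
  by rewrite linearZZ -it -linearZZ sT1 raddf0.
Qed.

Lemma uS_factor_linear (F M B : lmodType R) (psi : {linear F -> M})
    (lam : {linear F -> B}) sa sb :
  (forall x, exists v, psi v = sa *: x) ->
  (forall d, psi d = 0 -> sb *: lam d = 0) ->
  exists sigma : {linear M -> B}, forall x v, psi v = sa *: x -> sigma x = sb *: lam v.
Proof.
move=> psi_surj lam_ker; have [ch chP] := choice psi_surj.
have lam_ch x v : psi v = sa *: x -> sb *: lam (ch x) = sb *: lam v.
  move=> psiv; apply/eqP; rewrite -subr_eq0 -scalerBr -linearB lam_ker //.
  by rewrite linearB chP psiv subrr.
have sigma_linear : linear (fun x => sb *: lam (ch x)).
  move=> a x y; rewrite (lam_ch _ (a *: ch x + ch y)).
    by rewrite linearP scalerDr !scalerA mulrC.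
  by rewrite linearP !chP scalerDr !scalerA mulrC.
by exists (pack_linear sigma_linear) => x v /lam_ch.
Qed.

Lemma uS_lifting_of_relations (M : lmodType R) n (psi : {linear 'rV[R]_n -> M})
    (zs : seq (M * 'cV[R]_n)) sa sb sc :
  sa \in S -> sb \in S -> sc \in S ->
  (forall x, exists v, psi v = sa *: x) ->
  (forall z, z \in zs -> forall d, psi d = 0 -> sb * (d *m z.2) 0 0 = 0) ->
  (forall v, sc *: psi v = \sum_(z <- zs) (v *m z.2) 0 0 *: z.1) ->
  uS_lifting M.
Proof.
have [_ SM] := S_mult.
move=> saS sbS scS psi_surj zs_ker psi_zs B C g s sS g_surj.
exists (sb * (s * (sc * sa))); first by rewrite !SM.
move=> h; have [b bP] := choice (fun z : M * 'cV[R]_n => g_surj (h z.1)).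
pose lam (v : 'rV[R]_n) : B := \sum_(z <- zs) (v *m z.2) 0 0 *: b z.
have lam_linear : linear lam.
  move=> a u v; rewrite /lam scaler_sumr -big_split; apply: eq_bigr => z _.
  by rewrite mulmxDl -scalemxAl !mxE scalerDl scalerA.
have g_lam v : g (lam v) = s *: h (sc *: psi v).
  rewrite /lam psi_zs (linear_sum h) (linear_sum g) scaler_sumr; apply: eq_bigr => z _.
  by rewrite (linearZZ g) (linearZZ h) bP !scalerA mulrC.
have lam_ker d : psi d = 0 -> sb *: lam d = 0.
  move=> psid; rewrite scaler_sumr big_seq big1 // => z zzs.
  by rewrite scalerA zs_ker ?scale0r.
have [sigma sigmaE] :=
  uS_factor_linear (lam := pack_linear lam_linear) psi_surj lam_ker.
exists sigma => x; have [v psiv] := psi_surj x.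
by rewrite (sigmaE x v psiv) (linearZZ g) g_lam psiv !(linearZZ h) !scalerA !mulrA.
Qed.

Lemma uS_fin_presented_flat_projective (M : lmodType R) :
  uS_fin_presented S M -> uS_flat S M -> uS_projective S M.
Proof.
move=> /uS_fin_presented_presentation[s sS [n [m [psi [phi]]]]].
move=> [psi_phi psi_surj psi_ker].
move=> /uS_flat_relations/(_ psi_phi)[s' s'S [zs [zs_ker psi_zs]]].
apply/uS_projectiveP; apply: (uS_lifting_of_relations sS sS s'S psi_surj _ psi_zs).
move=> z /zs_ker Az d /psi_ker[w phiw].
have := congr1 (fun u : 'rV_n => (u *m z.2) 0 0) phiw.
by rewrite /= -(mul_rV_lin1 phi w) -mulmxA Az mulmx0 -scalemxAl !mxE.
Qed.

End uSModules.

Theorem proposition2p8 (R : comPzRingType) (S : {pred R}) :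
  mult_subset S ->
  (forall M : lmodType R, S_finite S M -> uS_projective S M -> uS_fin_presented S M) /\
  (forall M : lmodType R, uS_fin_presented S M -> uS_flat S M -> uS_projective S M).
Proof.
move=> S_mult; split=> M.
  exact: uS_projective_fin_presented.
exact: uS_fin_presented_flat_projective.
Qed.
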